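(* Let $G=(V,E)$ be a finite graph, $p_e\in(0,1)$ and $x_e>0$ for each $e\in E$. Let $\Omega=\{0,1\}^E$, $\Sigma\subset\Omega$, $f:\Omega\to2^\Sigma$, $f(\omega)=\Sigma^\uparrow(\omega):=\{\eta\in\Sigma\mid\eta\supset\omega\}$, and $$\rho[\omega]=\mathbb{P}_p[\omega]\ (\omega\in\Omega),\qquad\gamma[\eta]=\mathbb{P}_{\frac{x(1-p)}{1+x(1-p)}}[\eta\mid\Sigma]\propto\prod_{e\in\eta}x_e(1-p_e)\ (\eta\in\Sigma).$$ Let $\mathscr{P}$ be the probability measure on $\Omega\times\Sigma$ with $\mathscr{P}[\omega,\eta]\propto\rho[\omega]\gamma[\eta]\mathbf{1}[\eta\in f(\omega)]$. Then: (a) The marginal on $\Sigma$ satisfies $\mathscr{P}_\Sigma[\eta]\propto\prod_{e\in\eta}x_e$. For each $\omega$ with $\mathscr{P}_\Omega[\omega]\neq0$, $\mathscr{P}[\cdot\mid\omega]=\mathbb{P}_{\frac{x(1-p)}{1+x(1-p)}}[\cdot\mid\Sigma^\uparrow(\omega)]$. (b) The marginal on $\Omega$ is $\mathscr{P}_\Omega=\mathscr{P}_\Sigma\cap\mathbb{P}_p$. For each $\eta\in\Sigma$ with $\mathscr{P}_\Sigma[\eta]\neq0$, $\mathscr{P}[\cdot\mid\eta]=\mathbb{P}_p\cap\delta_\eta=\mathbb{P}_{\eta,p}$.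
   Context: Elements of $\{0,1\}^E$ are identified with subsets of $E$. For $r\in[0,1]^E$, $\mathbb{P}_r$ is Bernoulli percolation (edge $e$ open independently with probability $r_e$); vector operations such as $\frac{x(1-p)}{1+x(1-p)}$ are coordinatewise. $\mathbb{P}_{\eta,p}$ is Bernoulli percolation with parameters $p$ on the edges of $\eta$ with all edges outside $\eta$ closed. $\delta_\eta$ is the Dirac mass at $\eta$. For measures $\pi,\nu$ on $\{0,1\}^E$, $\pi\cap\nu$ is the law of the intersection of the open-edge sets of independent samples of $\pi$ and $\nu$. *)

From HB Require Import structures.
From mathcomp Require Import all_boot all_order all_algebra.
Set Implicit Arguments. Unset Strict Implicit. Unset Printing Implicit Defensive.
Import Order.TTheory GRing.Theory Num.Theory.
Local Open Scope ring_scope.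

Section Defs.
Variables (R : realFieldType) (E : finType).

(* A (probability) measure on {0,1}^E, identified with {set E}, is given by
   its mass function. *)

Definition bernoulli (r : E -> R) (w : {set E}) : R :=
  \prod_(e : E) (if e \in w then r e else 1 - r e).

Definition condP (mu : {set E} -> R) (S : {set {set E}}) (w : {set E}) : R :=
  (if w \in S then mu w else 0) / \sum_(z in S) mu z.

Definition qpar (x p : E -> R) (e : E) : R :=
  x e * (1 - p e) / (1 + x e * (1 - p e)).

Definition Sigma_up (Sigma : {set {set E}}) (w : {set E}) : {set {set E}} :=
  [set eta in Sigma | w \subset eta].

(* pi \cap nu : law of the intersection of independent samples. *)
Definition meas_cap (pi nu : {set E} -> R) (w : {set E}) : R :=
  \sum_(a : {set E}) \sum_(b : {set E} | a :&: b == w) pi a * nu b.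

Definition dirac (eta : {set E}) (w : {set E}) : R := (w == eta)%:R.

Definition bernoulli_on (eta : {set E}) (p : E -> R) (w : {set E}) : R :=
  if w \subset eta then
    \prod_(e in eta) (if e \in w then p e else 1 - p e)
  else 0.

Definition joint_weight (p x : E -> R) (Sigma : {set {set E}})
    (w eta : {set E}) : R :=
  bernoulli p w * condP (bernoulli (qpar x p)) Sigma eta
  * (eta \in Sigma_up Sigma w)%:R.

Definition scrP (p x : E -> R) (Sigma : {set {set E}}) (w eta : {set E}) : R :=
  joint_weight p x Sigma w eta /
  \sum_(w' : {set E}) \sum_(eta' : {set E}) joint_weight p x Sigma w' eta'.

Definition marg_Omega (p x : E -> R) Sigma (w : {set E}) : R :=
  \sum_(eta : {set E}) scrP p x Sigma w eta.

Definition marg_Sigma (p x : E -> R) Sigma (eta : {set E}) : R :=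
  \sum_(w : {set E}) scrP p x Sigma w eta.

End Defs.

From HB Require Import structures.
From mathcomp Require Import all_boot all_order all_algebra ring lra.
Import Order.TTheory GRing.Theory Num.Theory.
Local Open Scope ring_scope.

(** The key identity is
    [P_p[w] * P_q[eta] = K * prod_(e in eta) x_e * P_(eta,p)[w]] for
    [w \subset eta], with [q = x(1-p)/(1+x(1-p))] and a constant [K]:
    split [P_p[w]] into the law [P_(eta,p)[w]] of the edges of [eta] and the
    probability [prod_(e \notin eta) (1 - p_e)] that all other edges are
    closed, and note that [q_e = K_e x_e] and [(1 - q_e)(1 - p_e) = K_e] with
    [K_e = (1 - p_e)/(1 + x_e(1 - p_e))]. Hence the joint weight factorises
    as [(prod_(e in eta) x_e) 1[eta \in Sigma] * P_(eta,p)[w]], which gives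
    the marginal on [Sigma] and the conditional law given [eta]; the law of
    [w] is then [P_Sigma \cap P_p], since intersecting [eta] with an
    independent Bernoulli sample has law [P_(eta,p)]. The conditional law
    given [w] is read off the original product form of the weight. *)

Section SubsetSums.
Context {R : comPzRingType} {E : finType}.

Lemma sum_set_prod (F : E -> bool -> R) :
  \sum_(a : {set E}) \prod_(e : E) F e (e \in a) =
  \prod_(e : E) (F e true + F e false).
Proof.
under [RHS]eq_bigr do rewrite -big_bool.
rewrite bigA_distr_bigA /=.
rewrite (reindex (fun f : {ffun E -> bool} => [set e | f e])) /=.
  by apply: eq_bigr => f _; apply: eq_bigr => e _; rewrite inE.
exists (fun a : {set E} => [ffun e => e \in a]) => [f _ | a _].
  by apply/ffunP => e; rewrite ffunE inE.
by apply/setP => e; rewrite inE ffunE.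
Qed.

Lemma sum_setI_prod (a w : {set E}) (F : E -> bool -> R) :
  \sum_(b : {set E} | a :&: b == w) \prod_(e : E) F e (e \in b) =
  if w \subset a then
    \prod_(e : E) (if e \in a then F e (e \in w) else F e true + F e false)
  else 0.
Proof.
case: ifP => wa; last first.
  by apply: big1 => b /eqP abw; move: wa; rewrite -abw subsetIl.
(* The factor [c == (e \in w)] kills every [b] whose trace on [a] is not [w]. *)
pose G e c := F e c * (if e \in a then (c == (e \in w))%:R else 1).
transitivity (\sum_(b : {set E}) \prod_(e : E) G e (e \in b)); last first.
  rewrite sum_set_prod; apply: eq_bigr => e _; rewrite /G.
  by case: (e \in a); case: (e \in w); rewrite /= ?mulr1 ?mulr0 ?addr0 ?add0r.
rewrite big_mkcond /=; apply: eq_bigr => b _; rewrite /G big_split /=.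
have [abw | abw] := eqVneq (a :&: b) w.
  rewrite [X in _ * X]big1 ?mulr1 // => e _; case ea: (e \in a) => //.
  by rewrite -abw inE ea eqxx.
have [e /andP[ea eb]] : exists e, (e \in a) && ((e \in b) != (e \in w)).
  apply/existsP; apply: contraNT abw => /existsPn same; apply/eqP/setP => e.
  move: (same e); rewrite inE; case ea: (e \in a) => /=.
    by rewrite negbK => /eqP.
  by move=> _; apply/esym/negbTE; apply: contraFN ea => /(subsetP wa).
by rewrite [X in _ * X](bigD1 e) //= ea (negbTE eb) mul0r mulr0.
Qed.

End SubsetSums.

Section Bernoulli.
Context {R : realFieldType} {E : finType}.
Implicit Types (p r x : E -> R) (a eta w : {set E}).

Lemma bernoulli_gt0 r eta : (forall e, 0 < r e < 1) -> 0 < bernoulli r eta.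
Proof.
move=> r01; apply: prodr_gt0 => e _.
by case/andP: (r01 e) => r0 r1; case: (e \in eta); rewrite ?subr_gt0.
Qed.

Lemma sum_bernoulli r : \sum_(w : {set E}) bernoulli r w = 1.
Proof.
rewrite (sum_set_prod (fun e c => if c then r e else 1 - r e)).
by rewrite big1 // => e _; rewrite addrC subrK.
Qed.

Lemma sum_setI_bernoulli r a w :
  \sum_(b : {set E} | a :&: b == w) bernoulli r b = bernoulli_on a r w.
Proof.
rewrite (sum_setI_prod a w (fun e c => if c then r e else 1 - r e)).
rewrite /bernoulli_on; case: ifP => // _.
rewrite [RHS]big_mkcond; apply: eq_bigr => e _.
by case: ifP => // _; rewrite addrC subrK.
Qed.

Lemma sum_bernoulli_on r a : \sum_(w : {set E}) bernoulli_on a r w = 1.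
Proof.
rewrite -(sum_bernoulli r) [RHS](partition_big (setI a) predT) //=.
by apply: eq_bigr => w _; rewrite -sum_setI_bernoulli.
Qed.

Lemma meas_cap_bernoulli (nu : {set E} -> R) r w :
  meas_cap nu (bernoulli r) w = \sum_(a : {set E}) nu a * bernoulli_on a r w.
Proof. by apply: eq_bigr => a _; rewrite -sum_setI_bernoulli big_distrr. Qed.

Lemma meas_cap_dirac r eta w :
  meas_cap (bernoulli r) (@dirac R E eta) w = bernoulli_on eta r w.
Proof.
rewrite -sum_setI_bernoulli [RHS]big_mkcond; apply: eq_bigr => a _ /=.
rewrite big_mkcond (bigD1 eta) //= big1 => [|b /negbTE b_eta].
  by rewrite /dirac eqxx setIC; case: eqP; rewrite ?mulr1 ?addr0.
by rewrite /dirac b_eta mulr0; case: ifP.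
Qed.

Lemma bernoulli_split r a w : w \subset a ->
  bernoulli r w = bernoulli_on a r w * \prod_(e | e \notin a) (1 - r e).
Proof.
move=> wa; rewrite /bernoulli_on wa /bernoulli (bigID (mem a)) /=.
congr (_ * _); apply: eq_bigr => e /negbTE ea.
by have -> : (e \in w) = false by apply: contraFF ea => /(subsetP wa).
Qed.

Lemma bernoulli_qpar x p eta : (forall e, 1 + x e * (1 - p e) != 0) ->
  bernoulli (qpar x p) eta * \prod_(e | e \notin eta) (1 - p e) =
  \prod_(e : E) ((1 - p e) / (1 + x e * (1 - p e))) * \prod_(e in eta) x e.
Proof.
move=> nz; rewrite /bernoulli [X in _ * X]big_mkcond.
rewrite [\prod_(e in eta) x e]big_mkcond.
rewrite -!big_split /=; apply: eq_bigr => e _; rewrite /qpar.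
by have := nz e; case: (e \in eta) => /= ? ; field.
Qed.

Lemma qpar_in01 x p e : 0 < x e -> p e < 1 -> 0 < qpar x p e < 1.
Proof.
move=> x0 p1; have a0 : 0 < x e * (1 - p e) by rewrite mulr_gt0 ?subr_gt0.
rewrite /qpar divr_gt0 ?ltr_pdivrMr ?mul1r /=; lra.
Qed.

Lemma condP_weight (mu f : {set E} -> R) (S : {set {set E}}) (c : R) eta :
  (forall z, f z = c * (if z \in S then mu z else 0)) ->
  \sum_(z : {set E}) f z != 0 ->
  f eta / \sum_(z : {set E}) f z = condP mu S eta.
Proof.
move=> fE; under eq_bigr do rewrite fE; rewrite -big_distrr -big_mkcond /= fE.
rewrite /condP mulf_eq0 negb_or => /andP[c0 S0].
by rewrite invfM mulrACA divff // mul1r.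
Qed.

End Bernoulli.

Definition sigma_weight {R : realFieldType} {E : finType}
    (Sigma : {set {set E}}) (x : E -> R) (eta : {set E}) : R :=
  if eta \in Sigma then \prod_(e in eta) x e else 0.

Section JointLaw.
Context {R : realFieldType} {E : finType}.
Variables (p x : E -> R) (Sigma : {set {set E}}).
Hypotheses (p_lt1 : forall e, p e < 1) (x_gt0 : forall e, 0 < x e)
  (Sigma_neq0 : Sigma != set0).

Let q := qpar x p.
Let Z : R := \sum_(z in Sigma) bernoulli q z.
Let K : R := \prod_(e : E) ((1 - p e) / (1 + x e * (1 - p e))).

Let denom_gt0 e : 0 < 1 + x e * (1 - p e).
Proof. by rewrite ltr_wpDr // mulr_ge0 ?subr_ge0 ?ltW. Qed.

Let nz_denom e : 1 + x e * (1 - p e) != 0.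
Proof. exact: lt0r_neq0. Qed.

Let sum_in_Sigma_gt0 (F : {set E} -> R) :
  (forall z, 0 < F z) -> 0 < \sum_(z in Sigma) F z.
Proof.
move=> F0; have [z0 z0S] := set0Pn _ Sigma_neq0.
rewrite (bigD1 z0) //= ltr_wpDr ?F0 // sumr_ge0 // => z _; exact: ltW.
Qed.

Let K_neq0 : K != 0.
Proof.
by rewrite lt0r_neq0 // prodr_gt0 // => e _; rewrite divr_gt0 ?subr_gt0.
Qed.

Let Z_neq0 : Z != 0.
Proof.
rewrite lt0r_neq0 // sum_in_Sigma_gt0 // => z.
by apply: bernoulli_gt0 => e; apply: qpar_in01.
Qed.

Let sum_sigma_weight_neq0 : \sum_(z : {set E}) sigma_weight Sigma x z != 0.
Proof.
rewrite -big_mkcond lt0r_neq0 //= sum_in_Sigma_gt0 // => z.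
exact: prodr_gt0.
Qed.

Lemma joint_weightE w eta :
  joint_weight p x Sigma w eta =
  bernoulli p w / Z * (if eta \in Sigma_up Sigma w then bernoulli q eta else 0).
Proof.
rewrite /joint_weight /condP /Sigma_up inE -/q -/Z.
case: (eta \in Sigma); case: (w \subset eta); rewrite /= ?mulr0 ?mul0r //.
by rewrite mulr1 mulrA mulrAC.
Qed.

Lemma joint_weight_factor w eta :
  joint_weight p x Sigma w eta =
  K / Z * sigma_weight Sigma x eta * bernoulli_on eta p w.
Proof.
rewrite joint_weightE /Sigma_up inE /sigma_weight.
case: (eta \in Sigma); last by rewrite !mulr0 mul0r.
case/boolP: (w \subset eta) => /= [w_eta | /negbTE w_eta]; last first.
  by rewrite /bernoulli_on w_eta !mulr0.
have qpE := bernoulli_qpar x p eta nz_denom; rewrite -/q -/K in qpE.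
by rewrite (bernoulli_split p eta w w_eta) (mulrAC K) -qpE; ring.
Qed.

Lemma scrP_factor w eta :
  scrP p x Sigma w eta =
  sigma_weight Sigma x eta / (\sum_(z : {set E}) sigma_weight Sigma x z)
  * bernoulli_on eta p w.
Proof.
have total : \sum_(w' : {set E}) \sum_(eta' : {set E})
    joint_weight p x Sigma w' eta' = K / Z * \sum_z sigma_weight Sigma x z.
  rewrite exchange_big big_distrr /=; apply: eq_bigr => z _.
  under eq_bigr do rewrite joint_weight_factor.
  by rewrite -mulr_sumr sum_bernoulli_on mulr1.
rewrite /scrP total joint_weight_factor.
by field; rewrite sum_sigma_weight_neq0 Z_neq0 K_neq0.
Qed.

Lemma marg_SigmaE eta :
  marg_Sigma p x Sigma eta =
  sigma_weight Sigma x eta / \sum_(z : {set E}) sigma_weight Sigma x z.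
Proof.
rewrite /marg_Sigma; under eq_bigr do rewrite scrP_factor.
by rewrite -mulr_sumr sum_bernoulli_on mulr1.
Qed.

Lemma scrP_marg_Sigma w eta :
  scrP p x Sigma w eta = marg_Sigma p x Sigma eta * bernoulli_on eta p w.
Proof. by rewrite scrP_factor marg_SigmaE. Qed.

Lemma marg_Omega_cap w :
  marg_Omega p x Sigma w = meas_cap (marg_Sigma p x Sigma) (bernoulli p) w.
Proof.
by rewrite meas_cap_bernoulli; apply: eq_bigr => eta _; rewrite scrP_marg_Sigma.
Qed.

Lemma scrP_given_Omega w eta : marg_Omega p x Sigma w != 0 ->
  scrP p x Sigma w eta / marg_Omega p x Sigma w =
  condP (bernoulli q) (Sigma_up Sigma w) eta.
Proof.
by apply: condP_weight => z; rewrite /scrP joint_weightE mulrAC.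
Qed.

Lemma scrP_given_Sigma w eta : marg_Sigma p x Sigma eta != 0 ->
  scrP p x Sigma w eta / marg_Sigma p x Sigma eta = bernoulli_on eta p w.
Proof. by move=> m0; rewrite scrP_marg_Sigma mulrC mulKf. Qed.

End JointLaw.

Theorem proposition3p5 (R : realFieldType) (E : finType)
    (p x : E -> R) (Sigma : {set {set E}})
    (hp : forall e, 0 < p e < 1) (hx : forall e, 0 < x e)
    (hSigma : Sigma != set0) :
  (* (a) marginal on Sigma is proportional to prod_{e in eta} x_e on Sigma *)
  (forall eta : {set E},
     marg_Sigma p x Sigma eta =
     (if eta \in Sigma then \prod_(e in eta) x e else 0)
       / \sum_(z in Sigma) \prod_(e in z) x e)
  /\
  (* (a) conditional law given omega *)
  (forall w : {set E}, marg_Omega p x Sigma w != 0 ->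
     forall eta : {set E},
       scrP p x Sigma w eta / marg_Omega p x Sigma w =
       condP (bernoulli (qpar x p)) (Sigma_up Sigma w) eta)
  /\
  (* (b) marginal on Omega is P_Sigma \cap P_p *)
  (forall w : {set E},
     marg_Omega p x Sigma w =
     meas_cap (marg_Sigma p x Sigma) (bernoulli p) w)
  /\
  (* (b) conditional law given eta *)
  (forall eta : {set E}, eta \in Sigma -> marg_Sigma p x Sigma eta != 0 ->
     forall w : {set E},
       scrP p x Sigma w eta / marg_Sigma p x Sigma eta =
         meas_cap (bernoulli p) (@dirac R E eta) w
       /\
       meas_cap (bernoulli p) (@dirac R E eta) w = bernoulli_on eta p w).
Proof.
have p_lt1 e : p e < 1 by case/andP: (hp e).
split; first by move=> eta; rewrite marg_SigmaE // /sigma_weight -big_mkcond.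
split; first by move=> w m0 eta; apply: scrP_given_Omega.
split; first exact: marg_Omega_cap.
move=> eta _ m0 w; rewrite meas_cap_dirac.
by split=> //; apply: scrP_given_Sigma.
Qed.
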